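(* Let $n,d\in\mathbb{N}$ with $1\le d$ and $d+1\le n$, and let $\mathbf{X}=\{\mathbf{x}_1,\dots,\mathbf{x}_m\}\subseteq\mathbb{B}^n\setminus\{\mathbf{0}\}$ be any dataset of nonzero boolean vectors. Let $\tilde{\mathbf{K}}^{(d)}$ and $\tilde{\mathbf{K}}^{(d+1)}$ be the $m\times m$ matrices with entries $\tilde\kappa_\vee^d(\mathbf{x}_i,\mathbf{x}_j)$ and $\tilde\kappa_\vee^{d+1}(\mathbf{x}_i,\mathbf{x}_j)$. Then $\tilde\kappa_\vee^d(\mathbf{x}_i,\mathbf{x}_j)^2\le\tilde\kappa_\vee^{d+1}(\mathbf{x}_i,\mathbf{x}_j)^2$ for all $i,j$, and consequently $\mathcal{C}(\tilde{\mathbf{K}}^{(d)})\ge\mathcal{C}(\tilde{\mathbf{K}}^{(d+1)})$. In other words, $\tilde\kappa_\vee^{d+1}$ is more general than $\tilde\kappa_\vee^d$.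
   Context: $\mathbb{B}=\{0,1\}$. $H:\mathbb{R}\to\mathbb{B}$ is the Heaviside function, $H(t)=1$ if $t>0$ and $0$ otherwise. Let $\mathbb{B}_d=\{\mathbf{b}\in\mathbb{B}^n:\|\mathbf{b}\|_1=d\}$. The Disjunctive kernel (D-Kernel) of arity $d$ is $\kappa_\vee^d(\mathbf{x},\mathbf{z})=\langle\phi_\vee^d(\mathbf{x}),\phi_\vee^d(\mathbf{z})\rangle$ where $\phi_\vee^d(\mathbf{x})=(H(\langle\mathbf{x},\mathbf{b}\rangle))_{\mathbf{b}\in\mathbb{B}_d}$ (each feature is the disjunction of the $d$ variables selected by $\mathbf{b}$). Equivalently, writing $|\mathbf{x}|=\langle\mathbf{x},\mathbf{x}\rangle$ for the number of ones, $\kappa_\vee^d(\mathbf{x},\mathbf{z})=\binom{n}{d}-\binom{n-|\mathbf{x}|}{d}-\binom{n-|\mathbf{z}|}{d}+\binom{n-|\mathbf{x}|-|\mathbf{z}|+\langle\mathbf{x},\mathbf{z}\rangle}{d}$. For a kernel $\kappa$, its normalized version is $\tilde\kappa(\mathbf{x},\mathbf{z})=\kappa(\mathbf{x},\mathbf{z})/\sqrt{\kappa(\mathbf{x},\mathbf{x})\kappa(\mathbf{z},\mathbf{z})}$. The spectral ratio of a positive semidefinite matrix $\mathbf{K}\in\mathbb{R}^{m\times m}$ is $\mathcal{C}(\mathbf{K})=\sum_i\mathbf{K}_{ii}/\sqrt{\sum_{i,j}\mathbf{K}_{ij}^2}$. A kernel $\kappa_1$ is said to be more general than $\kappa_2$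 if $\mathcal{C}(\mathbf{K}^{(1)}_{\mathbf{X}})\le\mathcal{C}(\mathbf{K}^{(2)}_{\mathbf{X}})$ for the kernel matrices on the datasets under consideration. *)

From HB Require Import structures.
From mathcomp Require Import all_boot all_order all_algebra.
Set Implicit Arguments. Unset Strict Implicit. Unset Printing Implicit Defensive.
Import Order.TTheory GRing.Theory Num.Theory.
Local Open Scope ring_scope.

Notation bvec n := {ffun 'I_n -> bool}.

Definition heaviside (R : realDomainType) (t : R) : R := if 0 < t then 1 else 0.

Definition binner (R : realDomainType) n (x z : bvec n) : R :=
  \sum_(i < n) (x i)%:R * (z i)%:R.

Definition Bd n d : {set bvec n} := [set b : bvec n | (\sum_(i < n) (b i : nat) == d)%N].

(* Disjunctive kernel: <phi_d(x), phi_d(z)>, phi_d(x) = (H(<x,b>))_{b in B_d}. *)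
Definition Dkernel (R : realDomainType) n d (x z : bvec n) : R :=
  \sum_(b in Bd n d) heaviside (binner R x b) * heaviside (binner R z b).

Definition normalize (R : rcfType) n (k : bvec n -> bvec n -> R) (x z : bvec n) : R :=
  k x z / Num.sqrt (k x x * k z z).

Definition nDkernel (R : rcfType) n d (x z : bvec n) : R :=
  normalize (@Dkernel R n d) x z.

Definition nDmatrix (R : rcfType) n d m (X : 'I_m -> bvec n) : 'M[R]_m :=
  \matrix_(i < m, j < m) nDkernel R d (X i) (X j).

Definition spectral_ratio (R : rcfType) m (K : 'M[R]_m) : R :=
  \tr K / Num.sqrt (\sum_(i < m) \sum_(j < m) K i j ^+ 2).

(* For nonzero x, z with supports S, U, the D-kernel of arity d counts
   the d-subsets of 'I_n meeting both S and U.  Counting complements and using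
   Pascal's rule, the diagonal value for arity e+1 is the sum of 'C(k, e) over
   n - |S| <= k < n, and the (e+1)-subsets meeting S but missing U are counted by
   the same sum over n - |S :|: U| <= k < n - |U|.  Since 'C(k, e+1) / 'C(k, e)
   grows with k, the ratio K^d(S,U) / K^d(S,S) is nondecreasing in d; multiplying
   this for both arguments gives the inequality between squared normalized kernels.
   The normalized kernel matrices have unit diagonal, so both spectral ratios have
   trace m and the one with larger Frobenius norm is smaller. *)
From HB Require Import structures.
From mathcomp Require Import all_boot all_order all_algebra.
From mathcomp Require Import zify.
Import Order.TTheory GRing.Theory Num.Theory.
Set Implicit Arguments. Unset Strict Implicit. Unset Printing Implicit Defensive.

Lemma bin_sum_nat e q p : q <= p ->
  'C(p, e.+1) = 'C(q, e.+1) + \sum_(q <= k < p) 'C(k, e).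
Proof.
elim: p => [|p IHp]; first by rewrite leqn0 => /eqP ->; rewrite big_geq.
rewrite leq_eqVlt => /orP [/eqP -> | ltqp]; first by rewrite big_geq ?addn0.
by rewrite big_nat_recr //= binS IHp // addnA.
Qed.

(* 'C(k, e.+1) / 'C(k, e) = (k - e) / e.+1 is nondecreasing in k. *)
Lemma bin_cross_le e k k' : k <= k' ->
  'C(k, e.+1) * 'C(k', e) <= 'C(k, e) * 'C(k', e.+1).
Proof.
move=> lekk'; rewrite -(leq_pmul2l (ltn0Sn e)) mulnA mul_bin_left mulnCA.
rewrite mul_bin_left mulnCA mulnA [_ * 'C(k', e)]mulnC mulnA -!mulnA.
rewrite mulnCA ['C(k, e) * _]mulnC mulnA -mulnA leq_mul2r leq_sub2r //.
by rewrite orbT.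
Qed.

Lemma sum_bin_cross_le_sep e a b c d : b <= c ->
  (\sum_(a <= i < b) 'C(i, e.+1)) * (\sum_(c <= j < d) 'C(j, e)) <=
  (\sum_(a <= i < b) 'C(i, e)) * (\sum_(c <= j < d) 'C(j, e.+1)).
Proof.
move=> lebc; rewrite !big_distrl /= big_seq_cond [X in _ <= X]big_seq_cond.
apply: leq_sum => i; rewrite andbT mem_index_iota => /andP [_ ltib].
rewrite !big_distrr /= big_seq_cond [X in _ <= X]big_seq_cond.
apply: leq_sum => j; rewrite andbT mem_index_iota => /andP [lecj _].
exact/bin_cross_le/(leq_trans (ltnW ltib))/(leq_trans lebc).
Qed.

Lemma sum_bin_cross_le e q p M N : q <= M -> p <= N -> q <= p -> M <= N ->
  (\sum_(q <= i < p) 'C(i, e.+1)) * (\sum_(M <= j < N) 'C(j, e)) <=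
  (\sum_(q <= i < p) 'C(i, e)) * (\sum_(M <= j < N) 'C(j, e.+1)).
Proof.
move=> leqM lepN leqp leMN.
have [lepM | ltMp] := leqP p M; first exact: sum_bin_cross_le_sep.
(* Split at M and p: the overlap [M, p) contributes the same product to both
   sides, and every other cross product is covered by the separated case. *)
rewrite !(big_cat_nat (n := M) leqM (ltnW ltMp)).
rewrite !(big_cat_nat (n := p) (ltnW ltMp) lepN) /=.
have h1 := @sum_bin_cross_le_sep e q M M p (leqnn M).
have h2 := @sum_bin_cross_le_sep e q M p N (ltnW ltMp).
have h3 := @sum_bin_cross_le_sep e M p p N (leqnn p).
move: h1 h2 h3.
set G1 := \sum_(q <= i < M) _; set F1 := \sum_(q <= i < M) _.
set Gc := \sum_(M <= i < p) _; set Fc := \sum_(M <= i < p) _.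
set G2 := \sum_(p <= i < N) _; set F2 := \sum_(p <= i < N) _.
move=> h1 h2 h3; nia.
Qed.

Lemma card_set_predID (T : finType) (P Q : pred T) :
  #|[set x | P x]| = #|[set x | P x && Q x]| + #|[set x | P x && ~~ Q x]|.
Proof.
rewrite -(cardsID [set x | Q x] [set x | P x]).
by congr (_ + _); apply: eq_card => x; rewrite !inE; case: (P x); case: (Q x).
Qed.

Section SubsetCounts.

Variable n : nat.
Implicit Types (S U B : {set 'I_n}) (d e : nat).

Definition meets S B := ~~ (B \subset ~: S).

Definition meet_count d S U :=
  #|[set B : {set 'I_n} | [&& #|B| == d, meets S B & meets U B]]|.

Definition meet_miss_count d S U :=
  #|[set B : {set 'I_n} | [&& #|B| == d, meets S B & ~~ meets U B]]|.

Lemma meet_countC d S U : meet_count d S U = meet_count d U S.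
Proof.
by apply: eq_card => B; rewrite !inE; case: (meets S B); case: (meets U B).
Qed.

Lemma card_draws_compl d S :
  #|[set B : {set 'I_n} | (B \subset ~: S) && (#|B| == d)]| = 'C(n - #|S|, d).
Proof.
rewrite cards_draws; congr 'C(_, _).
by have := cardsC S; rewrite card_ord; lia.
Qed.

Lemma meet_count_diag d S : meet_count d S S + 'C(n - #|S|, d) = 'C(n, d).
Proof.
have := card_draws 'I_n d; rewrite card_ord => <-.
rewrite (card_set_predID _ (fun B => B \subset ~: S)) addnC.
congr (_ + _); last by apply: eq_card => B; rewrite !inE /meets andbb.
by rewrite -card_draws_compl; apply: eq_card => B; rewrite !inE andbC.
Qed.

Lemma meet_count_diag_split d S U :
  meet_count d S S = meet_count d S U + meet_miss_count d S U.
Proof.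
rewrite /meet_count /meet_miss_count (card_set_predID _ (meets U)).
by congr (_ + _); apply: eq_card => B; rewrite !inE andbb;
  case: (#|B| == d); case: (meets S B); case: (meets U B).
Qed.

Lemma meet_miss_count_compl d S U :
  meet_miss_count d S U + 'C(n - #|S :|: U|, d) = 'C(n - #|U|, d).
Proof.
rewrite -!card_draws_compl [RHS](card_set_predID _ (fun B => B \subset ~: S)) addnC.
congr (_ + _); apply: eq_card => B; rewrite !inE /meets ?negbK ?setCU ?subsetI;
  by case: (#|B| == d); case: (B \subset ~: S); case: (B \subset ~: U).
Qed.

Lemma meet_count_diag_sum e S :
  meet_count e.+1 S S = \sum_(n - #|S| <= k < n) 'C(k, e).
Proof.
by have := meet_count_diag e.+1 S; rewrite (bin_sum_nat e (leq_subr #|S| n)); lia.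
Qed.

Lemma meet_miss_count_sum e S U :
  meet_miss_count e.+1 S U = \sum_(n - #|S :|: U| <= k < n - #|U|) 'C(k, e).
Proof.
have le_USU : n - #|S :|: U| <= n - #|U|.
  by apply/leq_sub2l/subset_leq_card/subsetUr.
by have := meet_miss_count_compl e.+1 S U; rewrite (bin_sum_nat e le_USU); lia.
Qed.

Lemma meet_count_diag_gt0 e S : S != set0 -> e < n -> 0 < meet_count e.+1 S S.
Proof.
move=> S0 lten; rewrite meet_count_diag_sum.
have : n - #|S| < n by have := card_gt0 S; rewrite S0; lia.
move: (n - #|S|) => M ltMn.
rewrite [X in \sum_(_ <= k < X) _](_ : n = n.-1.+1) ?big_nat_recr /=; try lia.
by rewrite addn_gt0 bin_gt0; apply/orP; right; lia.
Qed.

(* With A = G + D at both arities, G1 A2 <= G2 A1 is equivalent to D2 A1 <= D1 A2,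
   which is the binomial-sum inequality above. *)
Lemma meet_count_ratio_le e S U :
  meet_count e.+1 S U * meet_count e.+2 S S <=
  meet_count e.+2 S U * meet_count e.+1 S S.
Proof.
have split1 := meet_count_diag_split e.+1 S U.
have split2 := meet_count_diag_split e.+2 S U.
have miss_le : meet_miss_count e.+2 S U * meet_count e.+1 S S <=
               meet_miss_count e.+1 S U * meet_count e.+2 S S.
  rewrite !meet_miss_count_sum !meet_count_diag_sum.
  apply: sum_bin_cross_le; rewrite ?leq_subr //;
    by apply/leq_sub2l/subset_leq_card; rewrite ?subsetUl ?subsetUr.
move: miss_le split1 split2.
set A1 := meet_count e.+1 S S; set A2 := meet_count e.+2 S S.
set G1 := meet_count e.+1 S U; set G2 := meet_count e.+2 S U.
set D1 := meet_miss_count e.+1 S U; set D2 := meet_miss_count e.+2 S U.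
move=> miss_le split1 split2; nia.
Qed.

End SubsetCounts.

Local Open Scope ring_scope.

Section DisjunctiveKernel.

Variable n : nat.

Definition bvec_of_set (B : {set 'I_n}) : bvec n := [ffun i => i \in B].
Definition supp (x : bvec n) : {set 'I_n} := [set i | x i].

Lemma bvec_of_set_bij : bijective bvec_of_set.
Proof.
exists supp => [B | b].
- by apply/setP => i; rewrite inE ffunE.
- by apply/ffunP => i; rewrite ffunE inE.
Qed.

Lemma bvec_of_set_Bd d (B : {set 'I_n}) : (bvec_of_set B \in Bd n d) = (#|B| == d).
Proof.
rewrite inE; congr (_ == _); rewrite -sum1_card [RHS]big_mkcond /=.
by apply: eq_bigr => i _; rewrite ffunE; case: (i \in B).
Qed.

Lemma heaviside_binner (R : realDomainType) (x : bvec n) (B : {set 'I_n}) :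
  heaviside (binner R x (bvec_of_set B)) = (meets (supp x) B)%:R.
Proof.
have -> : binner R x (bvec_of_set B) = (\sum_(i < n) (x i && (i \in B) : nat))%:R.
  rewrite natr_sum; apply: eq_bigr => i _.
  by rewrite ffunE -natrM; case: (x i); case: (i \in B).
rewrite /heaviside ltr0n lt0n sum_nat_eq0 /meets.
have -> : [forall i, (x i && (i \in B) : nat) == 0] = (B \subset ~: supp x).
  apply/forallP/subsetP => [H i iB | H i].
  - by move: (H i); rewrite !inE iB andbT; case: (x i).
  - case iB: (i \in B); last by rewrite andbF.
    by move: (H i iB); rewrite !inE => /negbTE ->.
by case: (B \subset ~: supp x).
Qed.

Lemma Dkernel_meet_count (R : realDomainType) d (x z : bvec n) :
  Dkernel R d x z = (meet_count d (supp x) (supp z))%:R.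
Proof.
rewrite /Dkernel (reindex bvec_of_set) /=; last exact/onW_bij/bvec_of_set_bij.
rewrite /meet_count -sum1_card natr_sum big_mkcond [RHS]big_mkcond /=.
apply: eq_bigr => B _; rewrite bvec_of_set_Bd !heaviside_binner inE.
by case: (#|B| == d); case: (meets (supp x) B); case: (meets (supp z) B);
  rewrite ?mulr1 ?mulr0.
Qed.

Lemma supp_neq0 (x : bvec n) : [exists k, x k] -> supp x != set0.
Proof. by case/existsP=> k xk; apply/set0Pn; exists k; rewrite inE. Qed.

Lemma Dkernel_diag_gt0 (R : realDomainType) e (x : bvec n) :
  (e < n)%N -> supp x != set0 -> 0 < Dkernel R e.+1 x x.
Proof. by move=> lten x0; rewrite Dkernel_meet_count ltr0n meet_count_diag_gt0. Qed.

Lemma nDkernel_sqr (R : rcfType) d (x z : bvec n) :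
  0 < Dkernel R d x x -> 0 < Dkernel R d z z ->
  nDkernel R d x z ^+ 2 = Dkernel R d x z ^+ 2 / (Dkernel R d x x * Dkernel R d z z).
Proof.
by move=> x0 z0; rewrite /nDkernel /normalize expr_div_n sqr_sqrtr ?mulr_ge0 ?ltW.
Qed.

Lemma nDkernel_diag (R : rcfType) d (x : bvec n) :
  0 < Dkernel R d x x -> nDkernel R d x x = 1.
Proof.
by move=> x0; rewrite /nDkernel /normalize -expr2 sqrtr_sqr gtr0_norm ?divff ?gt_eqF.
Qed.

Lemma nDkernel_sqr_le_succ (R : rcfType) e (x z : bvec n) : (e.+2 <= n)%N ->
  supp x != set0 -> supp z != set0 ->
  nDkernel R e.+1 x z ^+ 2 <= nDkernel R e.+2 x z ^+ 2.
Proof.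
move=> le_en x0 z0.
have ax1 := meet_count_diag_gt0 x0 (ltnW le_en).
have ax2 := meet_count_diag_gt0 x0 le_en.
have az1 := meet_count_diag_gt0 z0 (ltnW le_en).
have az2 := meet_count_diag_gt0 z0 le_en.
have ratio_x := meet_count_ratio_le e (supp x) (supp z).
have ratio_z := meet_count_ratio_le e (supp z) (supp x).
rewrite [meet_count e.+1 _ (supp x)]meet_countC in ratio_z.
rewrite [meet_count e.+2 _ (supp x)]meet_countC in ratio_z.
rewrite !nDkernel_sqr ?Dkernel_meet_count ?ltr0n //.
rewrite ler_pdivrMr ?mulr_gt0 ?ltr0n // mulrAC ler_pdivlMr ?mulr_gt0 ?ltr0n //.
rewrite -!natrX -!natrM ler_nat.
by rewrite -!mulnn mulnACA [leqRHS]mulnACA leq_mul.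
Qed.

End DisjunctiveKernel.

Lemma sumsq_unit_diag_ge (R : realFieldType) m (K : 'M[R]_m) :
  (forall i, K i i = 1) -> m%:R <= \sum_(i < m) \sum_(j < m) K i j ^+ 2.
Proof.
move=> K1; have -> : m%:R = \sum_(i < m) 1 :> R by rewrite sumr_const card_ord.
apply: ler_sum => i _; rewrite (bigD1 i) //= K1 expr1n lerDl.
by apply: sumr_ge0 => j _; apply: sqr_ge0.
Qed.

Lemma spectral_ratio_unit_diag_le (R : rcfType) m (K1 K2 : 'M[R]_m) :
  (forall i, K1 i i = 1) -> (forall i, K2 i i = 1) ->
  (forall i j, K1 i j ^+ 2 <= K2 i j ^+ 2) ->
  spectral_ratio K2 <= spectral_ratio K1.
Proof.
move=> K1_1 K2_1 le_K12; rewrite /spectral_ratio.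
have tr1 (K : 'M[R]_m) : (forall i, K i i = 1) -> \tr K = m%:R.
  by move=> K_1; rewrite /mxtrace (eq_bigr (fun=> 1)) // sumr_const card_ord.
rewrite !tr1 // {tr1}; case: m K1 K2 K1_1 K2_1 le_K12 => [|m] K1 K2 K1_1 K2_1 le_K12.
  by rewrite !mul0r.
have le_sum : \sum_(i < m.+1) \sum_(j < m.+1) K1 i j ^+ 2 <=
              \sum_(i < m.+1) \sum_(j < m.+1) K2 i j ^+ 2.
  by apply: ler_sum => i _; apply: ler_sum.
have sum1_gt0 : 0 < \sum_(i < m.+1) \sum_(j < m.+1) K1 i j ^+ 2.
  by apply: lt_le_trans (sumsq_unit_diag_ge K1_1); rewrite ltr0n.
have sum2_gt0 := lt_le_trans sum1_gt0 le_sum.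
by rewrite ler_wpM2l // lef_pV2 ?posrE ?sqrtr_gt0 // ler_sqrt // ltW.
Qed.

Theorem mainTheorem2 (R : rcfType) (n d m : nat) (X : 'I_m -> {ffun 'I_n -> bool}) :
  (1 <= d)%N -> (d + 1 <= n)%N ->
  (forall i : 'I_m, [exists k : 'I_n, X i k]) ->
  (forall i j : 'I_m,
      nDkernel R d (X i) (X j) ^+ 2 <= nDkernel R (d + 1)%N (X i) (X j) ^+ 2) /\
  spectral_ratio (nDmatrix R (d + 1)%N X) <= spectral_ratio (nDmatrix R d X).
Proof.
case: d => [//|e] _; rewrite addn1 => le_en X_neq0.
have X0 i : supp (X i) != set0 by apply: supp_neq0.
have le_sqr i j : nDkernel R e.+1 (X i) (X j) ^+ 2 <= nDkernel R e.+2 (X i) (X j) ^+ 2.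
  exact: nDkernel_sqr_le_succ.
split => //; apply: spectral_ratio_unit_diag_le => [i | i | i j]; rewrite !mxE //.
- by rewrite nDkernel_diag // Dkernel_diag_gt0 // ltnW.
- by rewrite nDkernel_diag // Dkernel_diag_gt0.
Qed.
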